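(* Let $\pi\in S_n$. For every $k\in\{1,\dots,n\}$, $(c_k,d_k)\in\beta_\pi$ if and only if $k$ is the largest element of the $\pi$-segment containing $k$.
   Context: $G$ is the direct product of chains $0=c_0\prec\dots\prec c_n$ and $0=d_0\prec\dots\prec d_n$, elements written $c_i\vee d_j$. For $\pi\in S_n$, $\beta_\pi$ is the join, in the lattice of join-congruences (equivalences compatible with $\vee$) of $(G;\vee)$, of the smallest join-congruences collapsing $\{c_{i-1}\vee d_{\pi(i)},c_i\vee d_{\pi(i)-1},c_i\vee d_{\pi(i)}\}$, $i=1,\dots,n$. For $\sigma\in S_n$, a set $I$ is closed if $\sigma(I)\subseteq I$; a nonempty interval $\{u,\dots,v\}$ of $\{1<\dots<n\}$ is a $\sigma$-section if it, $\{1,\dots,u-1\}$ and $\{v+1,\dots,n\}$ are closed; minimal $\sigma$-sections are $\sigma$-segments, and they partition $\{1,\dots,n\}$. *)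

From mathcomp Require Import all_boot all_order all_fingroup.
Set Implicit Arguments. Unset Strict Implicit. Unset Printing Implicit Defensive.

(* The grid G = chain {c_0<..<c_n} x chain {d_0<..<d_n}.
   The element c_i \/ d_j is encoded as the pair (i, j). *)
Definition grid (n : nat) : finType := ('I_n.+1 * 'I_n.+1)%type.

Definition omax m (a b : 'I_m) : 'I_m := if (a <= b)%N then b else a.

Definition gjoin n (x y : grid n) : grid n := (omax x.1 y.1, omax x.2 y.2).

Definition cd n (i j : nat) : grid n := (inord i, inord j).

Definition join_congruence n (R : grid n -> grid n -> Prop) : Prop :=
  [/\ (forall x, R x x), (forall x y, R x y -> R y x),
      (forall x y z, R x y -> R y z -> R x z) &
      (forall x y z, R x y -> R (gjoin x z) (gjoin y z))].

(* Permutation pi of {1..n} is represented by p : {perm 'I_n}, with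
   pi(j+1) = (p j) + 1.  The i-th generating triple (i = j+1) is
   { c_{i-1} \/ d_{pi i}, c_i \/ d_{pi i - 1}, c_i \/ d_{pi i} }. *)
Definition triple n (p : {perm 'I_n}) (j : 'I_n) : seq (grid n) :=
  [:: cd n j (p j).+1; cd n j.+1 (p j); cd n j.+1 (p j).+1].

(* beta_pi: the join (in the lattice of join-congruences) of the smallest
   join-congruences collapsing each triple = the smallest join-congruence
   collapsing all the triples. *)
Definition beta n (p : {perm 'I_n}) (x y : grid n) : Prop :=
  forall R : grid n -> grid n -> Prop, join_congruence R ->
    (forall j a b, a \in triple p j -> b \in triple p j -> R a b) -> R x y.

(* Index sets are subsets of {1..n}; element i is encoded by ordinal i-1. *)
Definition sclosed n (p : {perm 'I_n}) (I : {set 'I_n}) : Prop :=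
  forall x, x \in I -> p x \in I.

Definition interval n (u v : nat) : {set 'I_n} :=
  [set x : 'I_n | (u <= x.+1 <= v)%N].

Definition section n (p : {perm 'I_n}) (u v : nat) : Prop :=
  [/\ (1 <= u)%N, (u <= v <= n)%N,
      sclosed p (interval n u v), sclosed p (interval n 1 u.-1) &
      sclosed p (interval n v.+1 n)].

Definition segment n (p : {perm 'I_n}) (u v : nat) : Prop :=
  section p u v /\
  forall u' v', section p u' v' -> interval n u' v' \subset interval n u v ->
    interval n u' v' = interval n u v.

From mathcomp Require Import all_boot all_order all_fingroup.
From mathcomp Require Import zify.
Set Implicit Arguments. Unset Strict Implicit. Unset Printing Implicit Defensive.

(* Both sides reduce to the condition that the prefix {1, ..., k} is
   pi-invariant.  If it is, then for every j < k the triple of j joined with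
   d_k (resp. c_k) collapses c_j \/ d_k with c_(j+1) \/ d_k (resp. c_k \/ d_(pi j)
   with c_k \/ d_(pi j + 1)), and these steps chain d_k to c_k \/ d_k and c_k to
   c_k \/ d_k.  Conversely, for each j the map x = c_a \/ d_b |-> (j < a) || (pi j < b)
   is a join-homomorphism into bool that is constant on every triple, so its
   kernel contains beta_pi; it separates c_k from d_k unless j < k <-> pi j < k.
   Finally, the ends of the pi-sections are exactly the invariant prefixes, so
   k ends a segment iff {1..k} is invariant. *)

Lemma omaxE m (a b : 'I_m) : (omax a b : nat) = maxn a b.
Proof. by rewrite /omax; case: leqP => h; lia. Qed.

Section Grid.

Variable n : nat.

Lemma cd1 a b : a <= n -> ((cd n a b).1 : nat) = a.
Proof. by move=> ha; rewrite /= inordK. Qed.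

Lemma cd2 a b : b <= n -> ((cd n a b).2 : nat) = b.
Proof. by move=> hb; rewrite /= inordK. Qed.

Lemma gjoin_cd a b c d : a <= n -> b <= n -> c <= n -> d <= n ->
  gjoin (cd n a b) (cd n c d) = cd n (maxn a c) (maxn b d).
Proof.
move=> ha hb hc hd; rewrite /gjoin; congr pair; apply: val_inj;
  rewrite /= omaxE /= !inordK //; lia.
Qed.

Lemma join_congruence_kernel (f : grid n -> bool) :
  (forall x z, f (gjoin x z) = f x || f z) ->
  join_congruence (fun x y => f x = f y).
Proof.
move=> fM; split=> [//|x y|x y z|x y z e]; [exact: esym|exact: etrans|].
by rewrite !fM e.
Qed.

End Grid.

(* {1, ..., k} is pi-invariant; recall that the ordinal j encodes j + 1. *)
Definition prefix_stable n (p : {perm 'I_n}) (k : nat) : bool :=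
  [forall j : 'I_n, (j < k) == (p j < k)].

Lemma prefix_stableP n (p : {perm 'I_n}) k :
  reflect (forall j : 'I_n, (j < k) = (p j < k)) (prefix_stable p k).
Proof. by apply: (iffP forallP) => h j; [apply/eqP: (h j) | rewrite h]. Qed.

Lemma prefix_stable0 n (p : {perm 'I_n}) : prefix_stable p 0.
Proof. by apply/prefix_stableP => j; rewrite !ltn0. Qed.

Section Beta.

Variables (n : nat) (p : {perm 'I_n}).

Lemma beta_prefix_stable k : k <= n ->
  beta p (cd n k 0) (cd n 0 k) -> prefix_stable p k.
Proof.
move=> kn Hbeta; apply/prefix_stableP => j0.
pose f (x : grid n) := (j0 < x.1) || (p j0 < x.2).
have fM x z : f (gjoin x z) = f x || f z.
  by rewrite /f /gjoin /= !omaxE !leq_max orbACA.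
have f_cd a b : a <= n -> b <= n -> f (cd n a b) = (j0 < a) || (p j0 < b).
  by move=> ha hb; rewrite /f cd1 // cd2.
have ltS_neq (x y : nat) : x != y -> (y < x.+1) = (y < x).
  by move=> ne; rewrite ltnS leq_eqVlt eq_sym (negbTE ne).
have pj_neq (j : 'I_n) : j != j0 -> (p j : nat) != p j0.
  by rewrite (inj_eq val_inj) (inj_eq perm_inj).
have f_triple j c : c \in triple p j -> f c = (j0 < j.+1) || (p j0 < (p j).+1).
  have [hj hpj] : j <= n /\ p j <= n by split; apply: ltnW.
  rewrite !inE => /or3P[] /eqP ->; rewrite f_cd //;
    have [->|ne] := eqVneq j j0; rewrite ?ltnSn ?orbT //;
    by rewrite (ltS_neq _ _ ne) (ltS_neq _ _ (pj_neq _ ne)).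
suff : f (cd n k 0) = f (cd n 0 k) by rewrite !f_cd // ?ltn0 ?orbF.
by apply: Hbeta (join_congruence_kernel fM) _ => j a b /f_triple -> /f_triple ->.
Qed.

Lemma prefix_stable_beta k : k <= n -> prefix_stable p k ->
  beta p (cd n k 0) (cd n 0 k).
Proof.
move=> kn /prefix_stableP ik R [Rr Rs Rt Rc] HT.
have bounds (j : 'I_n) : j < k -> [/\ j < n, p j < n & p j < k].
  by move=> jk; rewrite -ik jk !ltn_ord.
have step_c (j : 'I_n) : j < k -> R (cd n j k) (cd n j.+1 k).
  move=> /bounds[? ? ?].
  have T1 : R (cd n j (p j).+1) (cd n j.+1 (p j).+1).
    by apply: (HT j); rewrite !inE eqxx ?orbT.
  have := Rc _ _ (cd n 0 k) T1.
  by rewrite !gjoin_cd //; try lia; rewrite maxn0 (maxn_idPr _).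
have step_d (j : 'I_n) : j < k -> R (cd n k (p j)) (cd n k (p j).+1).
  move=> jk; have [? ? ?] := bounds j jk.
  have T2 : R (cd n j.+1 (p j)) (cd n j.+1 (p j).+1).
    by apply: (HT j); rewrite !inE eqxx ?orbT.
  have := Rc _ _ (cd n k 0) T2.
  by rewrite !gjoin_cd //; try lia; rewrite maxn0 (maxn_idPr _).
have chain_c i : i <= k -> R (cd n 0 k) (cd n i k).
  elim: i => [|i IH] hi; first exact: Rr.
  have hin : i < n by lia.
  exact: Rt (IH (ltnW hi)) (step_c (Ordinal hin) hi).
have chain_d i : i <= k -> R (cd n k 0) (cd n k i).
  elim: i => [|i IH] hi; first exact: Rr.
  have hin : i < n by lia.
  have pj : p (p^-1 (Ordinal hin))%g = Ordinal hin by rewrite permKV.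
  have := step_d (p^-1 (Ordinal hin))%g; rewrite ik pj => /(_ hi).
  exact: Rt (IH (ltnW hi)).
exact: Rt (chain_d k (leqnn k)) (Rs _ _ (chain_c k (leqnn k))).
Qed.

End Beta.

Section Segments.

Variables (n : nat) (p : {perm 'I_n}).

Lemma section_prefix_stable u v :
  section p u v -> prefix_stable p u.-1 && prefix_stable p v.
Proof.
case=> h1 /andP[h2 h2'] h3 h4 h5; apply/andP; split; apply/prefix_stableP=> x;
  move: (h3 x) (h4 x) (h5 x) (ltn_ord x) (ltn_ord (p x)); rewrite !inE; lia.
Qed.

Lemma prefix_stable_section u v : 1 <= u -> u <= v <= n ->
  prefix_stable p u.-1 -> prefix_stable p v -> section p u v.
Proof.
move=> h1 h2 /prefix_stableP i1 /prefix_stableP i2; split=> // x;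
  move: (i1 x) (i2 x) (ltn_ord x) (ltn_ord (p x)); rewrite !inE; lia.
Qed.

Lemma interval_subset_bounds u v u' v' : 1 <= u' -> u' <= v' <= n ->
  interval n u' v' \subset interval n u v -> u <= u' /\ v' <= v.
Proof.
move=> h1 /andP[h2 h3] /subsetP sub.
have hu : u'.-1 < n by lia.
have hv : v'.-1 < n by lia.
by move: (sub (Ordinal hu)) (sub (Ordinal hv)); rewrite !inE /=; lia.
Qed.

Lemma segment_of_gap u v : 1 <= u -> u <= v <= n ->
  prefix_stable p u.-1 -> prefix_stable p v ->
  (forall i, u <= i < v -> ~~ prefix_stable p i) -> segment p u v.
Proof.
move=> h1 huv su sv gap; split; first exact: prefix_stable_section.
move=> u' v' hs sub; have /andP[su' sv'] := section_prefix_stable hs.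
case: hs => h1' huv' _ _ _.
have [le_uu' le_v'v] := interval_subset_bounds h1' huv' sub.
have -> : v' = v.
  apply/eqP; rewrite eqn_leq le_v'v leqNgt.
  by apply: contraL sv' => lt_v'v; apply: gap; lia.
have -> // : u' = u.
apply/eqP; rewrite eqn_leq le_uu' andbT leqNgt.
by apply: contraL su' => lt_uu'; apply: gap; lia.
Qed.

Lemma prefix_stable_segment k : 1 <= k <= n -> prefix_stable p k ->
  exists2 u, segment p u k & u <= k.
Proof.
move=> /andP[k1 kn] sk.
have exP : exists i, (i < k) && prefix_stable p i.
  by exists 0; rewrite k1 prefix_stable0.
have ubP i : (i < k) && prefix_stable p i -> i <= k by case/andP => /ltnW.
have [m /andP[mk sm] maxm] := ex_maxnP exP ubP.
exists m.+1 => //; apply: segment_of_gap => //; first by rewrite mk.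
move=> i /andP[mi ik]; apply/negP => si.
by have := maxm i; rewrite ik si => /(_ isT); lia.
Qed.

End Segments.

Theorem lemma4p3 (n : nat) (p : {perm 'I_n}) (k : nat) :
  (1 <= k <= n)%N ->
  (beta p (cd n k 0) (cd n 0 k) <->
   exists u : nat, segment p u k /\ (u <= k)%N).
Proof.
move=> hk; have kn : k <= n by case/andP: hk.
split=> [/(beta_prefix_stable kn) sk | [u [[hs _] _]]].
  by have [u ? ?] := prefix_stable_segment hk sk; exists u.
by apply: prefix_stable_beta => //; case/andP: (section_prefix_stable hs).
Qed.
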